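(* Let $a,b,c$ be positive integers. For any non-negative integers $p,m,n$, \[\zeta^\star_p(\{c\}^m,b,\{a\}^n)=\sum_{k=0}^m\sum_{l=0}^n(-1)^{k+l}\zeta_p(\{a\}^l,b,\{c\}^k)\cdot\zeta^\star_p(\{c\}^{m-k})\cdot\zeta^\star_p(\{a\}^{n-l}).\]
   Context: For an integer $p\geq 0$ and positive integers $k_1,\ldots,k_n$, $\zeta_p(k_1,\ldots,k_n)=\sum_{p\geq p_1>\cdots>p_n>0}p_1^{-k_1}\cdots p_n^{-k_n}$ and $\zeta^\star_p(k_1,\ldots,k_n)=\sum_{p\geq p_1\geq\cdots\geq p_n\geq 1}p_1^{-k_1}\cdots p_n^{-k_n}$; empty sums are $0$ and $\zeta_p(\varnothing)=\zeta^\star_p(\varnothing)=1$ for the empty index (also when $p=0$). $\{a\}^m$ denotes $m$ copies of $a$. *)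

From mathcomp Require Import all_boot all_order all_algebra.
Set Implicit Arguments. Unset Strict Implicit. Unset Printing Implicit Defensive.
Import Order.TTheory GRing.Theory Num.Theory.
Local Open Scope ring_scope.

Definition zetap (p : nat) (ks : seq nat) : rat :=
  \sum_(f : {ffun 'I_(size ks) -> 'I_p.+1} |
          [forall i : 'I_(size ks), (0 < f i)%N] &&
          [forall i : 'I_(size ks), forall j : 'I_(size ks), (i < j)%N ==> (f j < f i)%N])
    \prod_(i < size ks) ((f i)%:R ^- (nth 0%N ks i)).

Definition zetap_star (p : nat) (ks : seq nat) : rat :=
  \sum_(f : {ffun 'I_(size ks) -> 'I_p.+1} |
          [forall i : 'I_(size ks), (0 < f i)%N] &&
          [forall i : 'I_(size ks), forall j : 'I_(size ks), (i < j)%N ==> (f j <= f i)%N])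
    \prod_(i < size ks) ((f i)%:R ^- (nth 0%N ks i)).

(* Both sides are sums over the value j of the argument at the position of b.  On the
   left, the c's before b contribute the complete homogeneous sum h_m of the weights
   i^-c over p >= i >= j, and the a's after b the sum h_n of the weights i^-a over
   j >= i >= 1; on the right the pieces are elementary sums e_k instead.  The identity
   E(-t) H(t) = 1 between the generating functions of e and h on an interval of weights,
   propagated one weight at a time, rewrites h over (L, U] and over (0, L] as
   convolutions of signed elementary sums with h over (0, U]; exchanging the order of
   summation then gives the claim. *)

From mathcomp Require Import all_boot all_order all_algebra zify ring.
Import Order.TTheory GRing.Theory Num.Theory.
Local Open Scope ring_scope.
Set Implicit Arguments. Unset Strict Implicit. Unset Printing Implicit Defensive.

Definition zeta_weight (k j : nat) : rat := j%:R ^- k.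

Definition chain_rel (strict : bool) (x y : nat) : bool :=
  if strict then (x < y)%N else (x <= y)%N.

Definition next_bound (strict : bool) (j : nat) : nat := if strict then j.-1 else j.

Definition chain_cond N n strict U (g : {ffun 'I_n -> 'I_N}) : bool :=
  [&& [forall i, 0 < g i]%N,
      [forall i : 'I_n, forall j : 'I_n, (i < j)%N ==> chain_rel strict (g j) (g i)]
    & [forall i, g i <= U]%N].

(* N only fixes the type of the arguments, so that the bound U can vary in recursions. *)
Definition zeta_bounded N strict (ks : seq nat) U : rat :=
  \sum_(g : {ffun 'I_(size ks) -> 'I_N} | chain_cond strict U g)
    \prod_(i < size ks) (g i)%:R ^- nth 0%N ks i.

Fixpoint nested_zeta strict (ks : seq nat) U : rat :=
  if ks is k :: ks' then
    \sum_(1 <= j < U.+1) zeta_weight k j * nested_zeta strict ks' (next_bound strict j)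
  else 1.

Lemma forall_ord_recl n (P : pred 'I_n.+1) :
  [forall i, P i] = P ord0 && [forall i : 'I_n, P (lift ord0 i)].
Proof.
apply/forallP/andP => [H|[H0 /forallP H] i]; first by split => //; apply/forallP.
by case: (unliftP ord0 i) => [j ->|->].
Qed.

Lemma chain_rel_next_bound strict x y U : (0 < x <= U)%N ->
  chain_rel strict y x && (y <= U)%N = (y <= next_bound strict x)%N.
Proof. by rewrite /chain_rel /next_bound; case: strict; lia. Qed.

Section FfunCons.
Variables (N n : nat) (x : 'I_N) (g : {ffun 'I_n -> 'I_N}).

Definition ffun_cons : {ffun 'I_n.+1 -> 'I_N} :=
  [ffun i => if unlift ord0 i is Some i' then g i' else x].

Lemma ffun_cons0 : ffun_cons ord0 = x.
Proof. by rewrite ffunE unlift_none. Qed.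

Lemma ffun_consS i : ffun_cons (lift ord0 i) = g i.
Proof. by rewrite ffunE liftK. Qed.

Lemma forall_ffun_cons (P : pred 'I_N) :
  [forall i, P (ffun_cons i)] = P x && [forall i, P (g i)].
Proof.
rewrite forall_ord_recl ffun_cons0; congr andb.
by apply: eq_forallb => i; rewrite ffun_consS.
Qed.

Lemma chain_ffun_cons (r : rel nat) :
  [forall i : 'I_n.+1, forall j : 'I_n.+1, (i < j)%N ==> r (ffun_cons j) (ffun_cons i)] =
  [forall j, r (g j) x] && [forall i : 'I_n, forall j : 'I_n, (i < j)%N ==> r (g j) (g i)].
Proof.
rewrite forall_ord_recl !forall_ord_recl /= ffun_cons0; congr andb.
  by apply: eq_forallb => j; rewrite ffun_consS.
apply: eq_forallb => i; rewrite forall_ord_recl /=; apply: eq_forallb => j.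
by rewrite !ffun_consS.
Qed.

Lemma chain_cond_ffun_cons strict U :
  chain_cond strict U ffun_cons =
  (0 < x <= U)%N && chain_cond strict (next_bound strict x) g.
Proof.
rewrite /chain_cond (forall_ffun_cons (fun y => 0 < y)%N).
rewrite (forall_ffun_cons (fun y => y <= U)%N) chain_ffun_cons.
have [x0|] := ltnP 0 x; last by rewrite leqn0 => /eqP->.
have [xU|] /= := leqP x U; last by rewrite !andbF.
have xU' : (0 < x <= U)%N by rewrite x0.
have E : [forall j, chain_rel strict (g j) x] && [forall i, g i <= U]%N =
         [forall i, g i <= next_bound strict x]%N.
  apply/andP/forallP => [[/forallP H1 /forallP H2] i | H].
    by rewrite -(chain_rel_next_bound _ _ xU') H1 H2.
  by split; apply/forallP => i; have := H i; rewrite -(chain_rel_next_bound _ _ xU') => /andP[].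
by rewrite -E; congr andb; rewrite -andbA andbCA.
Qed.

End FfunCons.

Lemma ffun_cons_bij N n : bijective (fun p : 'I_N * {ffun 'I_n -> 'I_N} => ffun_cons p.1 p.2).
Proof.
exists (fun f : {ffun 'I_n.+1 -> 'I_N} => (f ord0, [ffun i => f (lift ord0 i)])).
  by case=> x g /=; rewrite ffun_cons0; congr pair; apply/ffunP => i; rewrite ffunE ffun_consS.
move=> f; apply/ffunP => i; rewrite ffunE /=.
by case: (unliftP ord0 i) => [j ->|->] /=; rewrite ?ffunE.
Qed.

Lemma sum_ord_pos_le (R : nmodType) N U (F : nat -> R) : (U < N)%N ->
  \sum_(x < N | (0 < x <= U)%N) F x = \sum_(1 <= j < U.+1) F j.
Proof.
move=> UN; rewrite -(big_mkord (fun x => 0 < x <= U)%N) big_ltn_cond ?(leq_ltn_trans _ UN) //=.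
rewrite (big_nat_widen _ _ _ _ _ UN).
by rewrite big_nat_cond [RHS]big_nat_cond; apply: eq_bigl => i; lia.
Qed.

Lemma zeta_bounded_cons N strict k ks U : (U < N)%N ->
  zeta_bounded N strict (k :: ks) U =
  \sum_(1 <= j < U.+1) zeta_weight k j * zeta_bounded N strict ks (next_bound strict j).
Proof.
move=> UN; rewrite /zeta_bounded /=.
rewrite (reindex _ (onW_bij _ (@ffun_cons_bij N (size ks)))) /=.
rewrite (eq_bigl _ _ (fun p => chain_cond_ffun_cons p.1 p.2 strict U)).
under eq_bigr => p _.
  rewrite big_ord_recl ffun_cons0.
  under eq_bigr => i _ do rewrite ffun_consS lift0.
  over.
rewrite -(pair_big_dep (fun x : 'I_N => 0 < x <= U)%N
  (fun x g => chain_cond strict (next_bound strict x) g)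
  (fun x g => x%:R ^- k * \prod_(i < size ks) (g i)%:R ^- nth 0%N ks i)) /=.
rewrite -(sum_ord_pos_le _ UN).
by apply: eq_bigr => x _; rewrite -big_distrr.
Qed.

Lemma zeta_bounded_nil N strict U : (0 < N)%N -> zeta_bounded N strict [::] U = 1.
Proof.
move=> N0; rewrite /zeta_bounded /= (eq_bigl xpredT) => [|g]; last first.
  by apply/and3P; split; apply/forallP => -[].
under eq_bigr do rewrite big_ord0.
by rewrite sumr_const card_ffun !card_ord expn0.
Qed.

Lemma zeta_bounded_nested N strict ks U : (U < N)%N ->
  zeta_bounded N strict ks U = nested_zeta strict ks U.
Proof.
elim: ks U => [|k ks IH] U UN /=; first by rewrite zeta_bounded_nil //; lia.
rewrite zeta_bounded_cons //; apply: eq_big_nat => j /andP[j1 jU].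
by rewrite IH // /next_bound; case: (strict); lia.
Qed.

Lemma zeta_bounded_top N strict ks : zeta_bounded N.+1 strict ks N =
  \sum_(g : {ffun 'I_(size ks) -> 'I_N.+1} |
      [forall i, 0 < g i]%N &&
      [forall i : 'I_(size ks), forall j : 'I_(size ks), (i < j)%N ==> chain_rel strict (g j) (g i)])
    \prod_(i < size ks) (g i)%:R ^- nth 0%N ks i.
Proof.
apply: eq_bigl => g; rewrite /chain_cond andbA.
suff -> : [forall i, g i <= N]%N by rewrite andbT.
by apply/forallP => i; rewrite -ltnS.
Qed.

Lemma zetap_nested p ks : zetap p ks = nested_zeta true ks p.
Proof. by rewrite -(@zeta_bounded_nested p.+1) // zeta_bounded_top. Qed.

Lemma zetap_star_nested p ks : zetap_star p ks = nested_zeta false ks p.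
Proof. by rewrite -(@zeta_bounded_nested p.+1) // zeta_bounded_top. Qed.

Section TruncatedSeries.
Variable R : comPzRingType.

Definition conv (f g : nat -> R) (n : nat) : R := \sum_(i < n.+1) f i * g (n - i)%N.

(* the coefficients of (1 - a t) F(t), where F is the generating function of f *)
Definition wdiff (a : R) (f : nat -> R) (n : nat) : R :=
  f n - (if n is n'.+1 then a * f n' else 0).

Definition delta (n : nat) : R := (n == 0)%:R.

Lemma eq_conv f1 f2 g1 g2 : f1 =1 f2 -> g1 =1 g2 -> conv f1 g1 =1 conv f2 g2.
Proof. by move=> Ef Eg n; apply: eq_bigr => i _; rewrite Ef Eg. Qed.

Lemma conv_deltal g : conv delta g =1 g.
Proof.
move=> n; rewrite /conv big_ord_recl subn0 mul1r big1 ?addr0 // => i _.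
by rewrite /delta lift0 mul0r.
Qed.

Lemma conv_wdiffr a f g : conv f (wdiff a g) =1 wdiff a (conv f g).
Proof.
rewrite /conv /wdiff => -[|n]; first by rewrite !big_ord1 !subr0.
under eq_bigr => i _ do rewrite mulrBr.
rewrite sumrB [X in _ - X]big_ord_recr /= subnn /= mulr0 addr0 big_distrr; congr (_ - _).
by apply: eq_bigr => i _; rewrite subSn 1?mulrCA // -ltnS.
Qed.

Lemma conv_wdiffl a f g : conv (wdiff a f) g =1 wdiff a (conv f g).
Proof.
rewrite /conv /wdiff => -[|n]; first by rewrite !big_ord1 !subr0.
under eq_bigr => i _ do rewrite mulrBl.
rewrite sumrB [X in _ - X]big_ord_recl /= mul0r add0r big_distrr; congr (_ - _).
by apply: eq_bigr => i _; rewrite subSS add0n /= mulrA.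
Qed.

Lemma wdiff_inj a f g : wdiff a f =1 wdiff a g -> f =1 g.
Proof.
move=> E; elim=> [|n IH]; first by have := E 0%N; rewrite /wdiff !subr0.
by have := E n.+1; rewrite /wdiff IH => /addIr.
Qed.

End TruncatedSeries.

Section SymmetricSums.
Variables (R : comPzRingType) (w : nat -> R).

(* [hsum m L U] is the sum of w j_1 * ... * w j_m over U >= j_1 >= ... >= j_m > L and
   [esum m L U] the same sum over U >= j_1 > ... > j_m > L: the complete homogeneous and
   the elementary symmetric polynomials in w (L+1), ..., w U. *)
Fixpoint hsum m L U : R :=
  if m is m'.+1 then \sum_(L.+1 <= j < U.+1) w j * hsum m' L j else 1.

Fixpoint esum m L U : R :=
  if m is m'.+1 then \sum_(L.+1 <= j < U.+1) w j * esum m' L j.-1 else 1.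

Definition signed_esum L U k : R := (-1) ^+ k * esum k L U.

Lemma hsum_id m U : hsum m U U = delta R m.
Proof. by case: m => //= m; rewrite big_geq. Qed.

Lemma signed_esum_id U : signed_esum U U =1 delta R.
Proof. by case=> [|m]; rewrite /signed_esum /= ?mulr1 // big_geq // mulr0. Qed.

Lemma wdiff_hsumS L U : (L <= U)%N ->
  wdiff (w U.+1) (fun m => hsum m L U.+1) =1 (fun m => hsum m L U).
Proof. by move=> LU [|m]; rewrite /wdiff /= ?subr0 // big_nat_recr //= addrK. Qed.

Lemma signed_esumS L U : (L <= U)%N ->
  signed_esum L U.+1 =1 wdiff (w U.+1) (signed_esum L U).
Proof.
move=> LU [|k]; rewrite /wdiff /signed_esum /= ?subr0 // big_nat_recr //= exprS; ring.
Qed.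

Lemma signed_esum_conv_hsum U : conv (signed_esum 0 U) (fun m => hsum m 0 U) =1 delta R.
Proof.
elim: U => [|U IH] n.
  by rewrite (eq_conv (signed_esum_id 0) (g2 := delta R)) ?conv_deltal // => m; rewrite hsum_id.
rewrite (eq_conv (signed_esumS _) (g2 := fun m => hsum m 0 U.+1)) // conv_wdiffl -conv_wdiffr.
by rewrite (eq_conv (f2 := signed_esum 0 U) _ (wdiff_hsumS _)).
Qed.

Lemma hsum_drop_lower L U : (L <= U)%N ->
  (fun m => hsum m L U) =1 conv (signed_esum 0 L) (fun m => hsum m 0 U).
Proof.
move/subnKC <-; elim: (U - L)%N => [|d IH].
  by move=> m; rewrite addn0 hsum_id signed_esum_conv_hsum.
rewrite addnS; apply: (wdiff_inj (a := w (L + d).+1)) => m.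
rewrite wdiff_hsumS ?leq_addr // IH -conv_wdiffr.
by apply: eq_conv => // j; rewrite wdiff_hsumS ?leq_addr.
Qed.

Lemma hsum_drop_upper L U : (L <= U)%N ->
  (fun m => hsum m 0 L) =1 conv (signed_esum L U) (fun m => hsum m 0 U).
Proof.
move/subnKC <-; elim: (U - L)%N => [|d IH] m.
  by rewrite addn0 (eq_conv (signed_esum_id L) (g2 := fun m => hsum m 0 L)) ?conv_deltal.
rewrite IH addnS (eq_conv (signed_esumS (leq_addr d L)) (g2 := fun m => hsum m 0 (L + d).+1)) //.
rewrite conv_wdiffl -conv_wdiffr; apply: eq_conv => // j.
by rewrite wdiff_hsumS.
Qed.

End SymmetricSums.

Lemma exchange_sum_le (R : nmodType) U (F : nat -> nat -> R) :
  \sum_(1 <= i < U.+1) \sum_(1 <= j < i.+1) F i j =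
  \sum_(1 <= j < U.+1) \sum_(j <= i < U.+1) F i j.
Proof.
elim: U => [|U IH]; first by rewrite !big_geq.
rewrite big_nat_recr //= IH [X in _ + X]big_nat_recr //= addrA -big_split.
rewrite [RHS]big_nat_recr //= big_nat1.
by congr (_ + _); apply: eq_big_nat => j /andP[_ jU]; rewrite [RHS]big_nat_recr ?(ltnW jU).
Qed.

Lemma exchange_sum_lt (R : nmodType) U (F : nat -> nat -> R) :
  \sum_(1 <= i < U.+1) \sum_(1 <= j < i) F i j =
  \sum_(1 <= j < U.+1) \sum_(j.+1 <= i < U.+1) F i j.
Proof.
elim: U => [|U IH]; first by rewrite !big_geq.
rewrite big_nat_recr //= IH -big_split [RHS]big_nat_recr //= [X in _ + X]big_geq // addr0.
by apply: eq_big_nat => j /andP[_ jU]; rewrite [RHS]big_nat_recr.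
Qed.

Lemma nested_zeta_star_nseq c m U :
  nested_zeta false (nseq m c) U = hsum (zeta_weight c) m 0 U.
Proof. by elim: m U => [|m IH] U //=; apply: eq_bigr => j _; rewrite IH. Qed.

Lemma nested_zeta_nseq c m U :
  nested_zeta true (nseq m c) U = esum (zeta_weight c) m 0 U.
Proof. by elim: m U => [|m IH] U //=; apply: eq_bigr => j _; rewrite IH. Qed.

Lemma nested_zeta_star_nseq_cat b c m ks U :
  nested_zeta false (nseq m c ++ b :: ks) U =
  \sum_(1 <= j < U.+1)
     hsum (zeta_weight c) m j.-1 U * (zeta_weight b j * nested_zeta false ks j).
Proof.
elim: m U => [|m IH] U /=; first by apply: eq_bigr => j _; rewrite mul1r.
under eq_bigr => i _ do rewrite IH big_distrr.
rewrite exchange_sum_le; apply: eq_big_nat => j /andP[j1 _].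
by rewrite prednK // big_distrl; apply: eq_bigr => i _; rewrite /= mulrA.
Qed.

Lemma nested_zeta_nseq_cat a b l ks U :
  nested_zeta true (nseq l a ++ b :: ks) U =
  \sum_(1 <= j < U.+1)
     esum (zeta_weight a) l j U * (zeta_weight b j * nested_zeta true ks j.-1).
Proof.
elim: l U => [|l IH] U /=; first by apply: eq_bigr => j _; rewrite mul1r.
rewrite (@eq_big_nat _ _ _ 1 U.+1 _ (fun i => \sum_(1 <= j < i)
   zeta_weight a i * (esum (zeta_weight a) l j i.-1 * (zeta_weight b j * nested_zeta true ks j.-1))));
  last by move=> i /andP[i1 _]; rewrite IH big_distrr prednK.
rewrite exchange_sum_lt; apply: eq_big_nat => j _.
by rewrite big_distrl; apply: eq_bigr => i _; rewrite /= mulrA.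
Qed.

Unset Implicit Arguments.
Theorem proposition2p2 (a b c : nat) (ha : (0 < a)%N) (hb : (0 < b)%N)
    (hc : (0 < c)%N) (p m n : nat) :
  zetap_star p (nseq m c ++ b :: nseq n a) =
  \sum_(k < m.+1) \sum_(l < n.+1)
     (-1) ^+ (k + l) * zetap p (nseq l a ++ b :: nseq k c)
       * zetap_star p (nseq (m - k) c) * zetap_star p (nseq (n - l) a).
Proof.
rewrite zetap_star_nested nested_zeta_star_nseq_cat.
under eq_big_nat => j /andP[_ jp].
  have jp' : (j <= p)%N by [].
  rewrite nested_zeta_star_nseq (hsum_drop_lower _ (leq_trans (leq_pred j) jp')).
  rewrite (hsum_drop_upper _ jp') /conv big_distrl.
  under eq_bigr => k _ do rewrite !big_distrr.
  over.
rewrite exchange_big; apply: eq_bigr => k _.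
rewrite exchange_big; apply: eq_bigr => l _.
rewrite zetap_nested nested_zeta_nseq_cat !zetap_star_nested !nested_zeta_star_nseq.
rewrite big_distrr !big_distrl; apply: eq_big_nat => j _.
rewrite /= nested_zeta_nseq /signed_esum exprD; ring.
Qed.
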